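(* Let $n\geq 1$ and $k\geq 1$ be integers and $d_1,\dots,d_k$ positive integers with $\sum_{i=1}^k d_i=n+1$. For $0\leq j\leq n$, let $S_j(n;d_1,\dots,d_k)$ denote the coefficient of $t^{n-j}$ in $n!\,F_n(t;d_1,\dots,d_k)$. Then $$S_j(n;d_1,\dots,d_k)=\begin{cases}2S_j(n;d_1,\dots,d_{k-1}) & \text{if } k+j \text{ is even},\\ 0 & \text{if } k+j\text{ is odd}.\end{cases}$$
   Context: For an integer $m>0$, $\binom{t}{m}=\frac{1}{m!}\prod_{i=0}^{m-1}(t-i)$. For $I\subset\{1,\dots,k\}$, $d_I=\sum_{i\in I}d_i$ (with $d_\emptyset=0$). For integers $m>0$, $k\geq 0$ and positive integers $d_1,\dots,d_k$, define $F_m(t;d_1,\dots,d_k)=\sum_{I\subset\{1,\dots,k\}}(-1)^{|I|}\binom{t+m-d_I}{m}$; its degree in $t$ is at most $m$. $S_j(n;d_1,\dots,d_{k-1})$ is defined analogously as the coefficient of $t^{n-j}$ in $n!\,F_n(t;d_1,\dots,d_{k-1})$. *)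

From mathcomp Require Import all_boot all_order all_algebra.
Set Implicit Arguments. Unset Strict Implicit. Unset Printing Implicit Defensive.
Import GRing.Theory Num.Theory.
Local Open Scope ring_scope.

Definition binomP (c : int) (m : nat) : {poly rat} :=
  (m`!%:R)^-1 *: \prod_(i < m) ('X + (c - i%:Z)%:~R%:P).

(* d_I for I a subset of the indices of the sequence d (0-indexed). *)
Definition dI (d : seq nat) (I : {set 'I_(size d)}) : nat :=
  (\sum_(i in I) nth 0 d i)%N.

Definition Fpoly (m : nat) (d : seq nat) : {poly rat} :=
  \sum_(I : {set 'I_(size d)}) (-1) ^+ #|I| * binomP (m%:Z - (dI I)%:Z) m.

Definition Scoef (j n : nat) (d : seq nat) : rat :=
  (n`!%:R *: Fpoly n d)`_(n - j).

From mathcomp Require Import all_boot all_order all_algebra.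
From mathcomp Require Import zify.
Import GRing.Theory Num.Theory.
Local Open Scope ring_scope.

(* Write n! F_n(t; d) = sum_I (-1)^|I| P(t + n - d_I) with P(u) = u (u - 1) ... (u - n + 1),
   and split the sum according to whether k belongs to I.  The terms with k \notin I form
   n! F_n(t; d_1, ..., d_(k-1)).  In the others, index by the complement J of I \ {k} in
   {1, ..., k-1}: as d_1 + ... + d_k = n + 1 the argument becomes t - 1 + d_J, and the
   reflection P(-u) = (-1)^n P(u + n - 1) turns this half into (-1)^(n+k) n! F_n(-t; d_1, ..., d_(k-1)).
   The coefficients of t^(n-j) of the two halves therefore add up with the factor 1 + (-1)^(k+j). *)

Section SubsetsOfOrdS.

Variable m : nat.
Implicit Types J : {set 'I_m}.

Local Notation liftS J := (lift ord_max @: J).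

Lemma card_liftS J : #|liftS J| = #|J|.
Proof. exact/card_imset/lift_inj. Qed.

Lemma notin_liftS J : ord_max \notin liftS J.
Proof. by apply/imsetP => -[j _] /eqP; rewrite (negbTE (neq_lift _ _)). Qed.

Lemma sum_liftS J (w : nat -> nat) :
  (\sum_(i in liftS J) w i = \sum_(j in J) w j)%N.
Proof.
rewrite big_imset; last by move=> i j _ _; apply: lift_inj.
by apply: eq_bigr => j _; rewrite lift_max.
Qed.

Lemma mem_liftS J j : (lift ord_max j \in liftS J) = (j \in J).
Proof. exact/mem_imset/lift_inj. Qed.

Lemma big_subsets_ordS (V : nmodType) (F : {set 'I_m.+1} -> V) :
  \sum_(I : {set 'I_m.+1}) F I =
  \sum_(J : {set 'I_m}) (F (liftS J) + F (ord_max |: liftS J)).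
Proof.
pose glue (Jb : {set 'I_m} * bool) := if Jb.2 then ord_max |: liftS Jb.1 else liftS Jb.1.
pose unglue (I : {set 'I_m.+1}) := ([set j | lift ord_max j \in I], ord_max \in I).
rewrite (reindex glue) /=.
  rewrite -(pair_bigA _ (fun J b => F (glue (J, b)))).
  by apply: eq_bigr => J _; rewrite big_bool addrC.
apply: onW_bij; exists unglue => [[J b]|I].
  rewrite /unglue /glue /=; congr pair.
    apply/setP => j; rewrite inE.
    by case: b; rewrite ?inE ?mem_liftS // eq_sym (negbTE (neq_lift _ _)).
  by case: b; rewrite ?setU11 ?(negbTE (notin_liftS J)).
apply/setP => i; rewrite /unglue /glue /=.
case: (unliftP ord_max i) => [j ->|->]; case: ifP => Imax; rewrite ?inE ?eqxx //.
- by rewrite mem_liftS inE eq_sym (negbTE (neq_lift _ _)).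
- by rewrite mem_liftS inE.
- by rewrite (negbTE (notin_liftS _)).
Qed.

End SubsetsOfOrdS.

Section ShiftedFalling.

Variable R : comNzRingType.

Definition shifted_falling (n : nat) (c : int) : {poly R} :=
  \prod_(i < n) ('X + (c - i%:Z)%:~R%:P).

Lemma shifted_falling_reflect n c :
  shifted_falling n c \Po - 'X = (-1) ^+ n * shifted_falling n (n%:Z - 1 - c).
Proof.
rewrite /shifted_falling rmorph_prod -[X in (-1) ^+ X]card_ord -prodrN.
rewrite [RHS](reindex_inj rev_ord_inj); apply: eq_bigr => i _ /=.
rewrite comp_polyD comp_polyX comp_polyC opprD -polyCN -rmorphN /=.
by congr (_ + _%:P); congr (_%:~R); move: (ltn_ord i); lia.
Qed.

Lemma coef_comp_polyNX (p : {poly R}) i : (p \Po - 'X)`_i = (-1) ^+ i * p`_i.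
Proof.
elim/poly_ind: p i => [|p c IHp] i; first by rewrite comp_poly0 !coef0 mulr0.
rewrite comp_polyD comp_polyC comp_polyM comp_polyX mulrN !coefD !coefC coefN !coefMX.
case: i => [|i] /=; first by rewrite oppr0 !add0r mul1r.
by rewrite IHp exprS !addr0 mulN1r mulNr.
Qed.

(* scaled_Fpoly n m w = n! F_n(t; w 0, ..., w (m - 1)); the weights are a function rather
   than a sequence so that dropping the last one does not change the index type. *)
Definition scaled_Fpoly (n m : nat) (w : nat -> nat) : {poly R} :=
  \sum_(I : {set 'I_m}) (-1) ^+ #|I| * shifted_falling n (n%:Z - (\sum_(i in I) w i)%N%:Z).

Lemma eq_scaled_Fpoly n m (w1 w2 : nat -> nat) :
  (forall i, i < m -> w1 i = w2 i)%N -> scaled_Fpoly n m w1 = scaled_Fpoly n m w2.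
Proof.
move=> eq_w; apply: eq_bigr => I _.
congr (_ * shifted_falling n (_ - _%:Z)).
by apply: eq_bigr => i _; apply: eq_w.
Qed.

Lemma scaled_FpolyS n m (w : nat -> nat) : (\sum_(i < m.+1) w i = n.+1)%N ->
  scaled_Fpoly n m.+1 w =
  scaled_Fpoly n m w + (-1) ^+ (n + m.+1) * (scaled_Fpoly n m w \Po - 'X).
Proof.
rewrite big_ord_recr /= => sum_w.
rewrite /scaled_Fpoly big_subsets_ordS big_split /=; congr (_ + _).
  by apply: eq_bigr => J _; rewrite card_liftS sum_liftS.
rewrite rmorph_sum mulr_sumr (reindex_inj (@setC_inj _)) /=; apply: eq_bigr => J _.
have cardJ : (#|~: J| + #|J| = m)%N by rewrite addnC cardsC card_ord.
have sumJ : (\sum_(i in ~: J) w i + \sum_(i in J) w i = \sum_(i < m) w i)%N.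
  rewrite addnC [RHS](bigID (mem J)) /=; congr addn.
  by apply: eq_bigl => i; rewrite inE.
rewrite cardsU1 notin_liftS card_liftS big_setU1 ?notin_liftS //= sum_liftS.
rewrite rmorphM rmorph_sign /= shifted_falling_reflect mulrA mulrA -!exprD.
congr (_ * shifted_falling n _); last first.
  move: sumJ sum_w.
  set a := (\sum_(i in ~: J) w i)%N; set b := (\sum_(i in J) w i)%N.
  set s := (\sum_(i < m) w i)%N; clearbody a b s; lia.
have -> : (n + m.+1 + #|J| + n = 1 + #|~: J| + (n + #|J|) * 2)%N by lia.
by rewrite [(-1) ^+ (_ + _ * 2)]exprD exprM sqrr_sign mulr1.
Qed.

Lemma coef_scaled_FpolyS n m (w : nat -> nat) j :
  (\sum_(i < m.+1) w i = n.+1)%N -> (j <= n)%N ->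
  (scaled_Fpoly n m.+1 w)`_(n - j) = (1 + (-1) ^+ (m.+1 + j)) * (scaled_Fpoly n m w)`_(n - j).
Proof.
move=> sum_w le_jn; rewrite scaled_FpolyS // -(rmorph_sign polyC) coefD coefCM.
rewrite coef_comp_polyNX mulrA -exprD mulrDl mul1r.
have -> : (n + m.+1 + (n - j) = m.+1 + j + (n - j) * 2)%N by lia.
by rewrite [(-1) ^+ (_ + _ * 2)]exprD exprM sqrr_sign mulr1.
Qed.

End ShiftedFalling.

Lemma Fpoly_scaledE n d : n`!%:R *: Fpoly n d = scaled_Fpoly rat n (size d) (nth 0%N d).
Proof.
rewrite /Fpoly scaler_sumr; apply: eq_bigr => I _.
by rewrite scalerAr /binomP scalerA mulfV ?scale1r // pnatr_eq0 -lt0n fact_gt0.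
Qed.

Theorem lemma3p5 (n k : nat) (d : seq nat) :
  (1 <= n)%N -> (1 <= k)%N -> size d = k -> all (fun x => 0 < x)%N d ->
  sumn d = n.+1 ->
  forall j : nat, (j <= n)%N ->
    Scoef j n d = (if odd (k + j) then 0 else 2 * Scoef j n (take k.-1 d)).
Proof.
move=> _ + size_d _ + j le_jn; rewrite -{}size_d.
case/lastP: d => [//|d x] _ sum_dx.
have -> : take (size (rcons d x)).-1 (rcons d x) = d by rewrite size_rcons -cats1 take_size_cat.
rewrite /Scoef !Fpoly_scaledE size_rcons coef_scaled_FpolyS //; last first.
  by rewrite -sum_dx sumnE (big_nth 0%N) big_mkord size_rcons.
rewrite (@eq_scaled_Fpoly _ _ _ _ (nth 0%N d)) => [|i lt_id]; last by rewrite nth_rcons lt_id.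
by rewrite -signr_odd; case: odd; rewrite ?expr1 ?subrr ?mul0r.
Qed.
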